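(* Let $f$ be a homeomorphism of a compact metric space $(X,d)$ and let $x\in X$ be a minimally expansive point of $f$ with expansivity constant $\mathfrak{c}>0$. Then for each $y\in B(x,\mathfrak{c})$ and each $0<\epsilon<\mathfrak{c}$ there exists $N\in\mathbb{N}$ such that for every pair $u,v\in\mathcal{O}_f(y)$ satisfying $d(f^n(u),f^n(v))<\mathfrak{c}$ for all $-N\le n\le N$, we have $d(u,v)<\epsilon$.
   Context: $B(x,\epsilon)=\{y: d(x,y)<\epsilon\}$, $\mathcal{O}_f(y)=\{f^n(y):n\in\mathbb{Z}\}$. $f$ is expansive on $A\subset X$ with expansivity constant $\mathfrak{c}$ if for all distinct $a,b\in A$ there is $n\in\mathbb{Z}$ with $d(f^n(a),f^n(b))>\mathfrak{c}$. A point $x$ is a minimally expansive point of $f$ with expansivity constant $\mathfrak{c}>0$ if for each $y\in B(x,\mathfrak{c})$, $f$ is expansive on $\overline{\mathcal{O}_f(y)}$ with expansivity constant $\mathfrak{c}$. *)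

From HB Require Import structures.
From mathcomp Require Import all_boot all_order all_algebra.
From mathcomp Require Import all_classical all_reals all_analysis.
Set Implicit Arguments. Unset Strict Implicit. Unset Printing Implicit Defensive.
Import Order.TTheory GRing.Theory Num.Theory.
Local Open Scope classical_set_scope.
Local Open Scope ring_scope.

Definition homeo_with {X : topologicalType} (f g : X -> X) : Prop :=
  cancel f g /\ cancel g f /\ continuous f /\ continuous g.

Definition zit {X : Type} (f g : X -> X) (n : int) : X -> X :=
  match n with
  | Posz m => iter m f
  | Negz m => iter m.+1 g
  end.

Definition orbit_z {X : Type} (f g : X -> X) (y : X) : set X :=
  [set z | exists n : int, z = zit f g n y].

Definition mball {R : realType} {X : metricType R} (x : X) (e : R) : set X :=
  [set y | mdist x y < e].

Definition expansive_on {R : realType} {X : metricType R} (f g : X -> X)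
  (A : set X) (c : R) : Prop :=
  forall a b, A a -> A b -> a <> b ->
    exists n : int, mdist (zit f g n a) (zit f g n b) > c.

Definition minimally_expansive_point {R : realType} {X : metricType R}
  (f g : X -> X) (x : X) (c : R) : Prop :=
  0 < c /\ forall y, mball x c y -> expansive_on f g (closure (orbit_z f g y)) c.

From HB Require Import structures.
From mathcomp Require Import all_boot all_order all_algebra.
From mathcomp Require Import all_classical all_reals all_analysis.
From mathcomp Require Import lra.
Import Order.TTheory GRing.Theory Num.Theory numFieldTopology.Exports.
Local Open Scope classical_set_scope.
Local Open Scope ring_scope.

(* Suppose no N works. Then for every N there is a pair (u_N, v_N) in the
   orbit of y that stays c-close on [-N, N] yet has d(u_N, v_N) >= eps.  A
   cluster point (a, b) of these pairs in the compact space X * X lies in the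
   closure of the orbit, and closedness of the conditions passes
   d(a, b) >= eps, hence a <> b, and d(f^n a, f^n b) <= c for every n to the
   limit.  This contradicts expansivity on the orbit closure of y, which
   holds because y lies in the c-ball of the minimally expansive point x. *)

Lemma cluster_sub_closed (T : topologicalType) (F : set_system T) (A : set T) :
  closed A -> F A -> cluster F `<=` A.
Proof. by move=> /closure_id {2}-> FA p; rewrite clusterE; apply. Qed.

Lemma continuous_fst (U V : topologicalType) : continuous (@fst U V).
Proof. by move=> [a b]; exact: cvg_fst. Qed.

Lemma continuous_snd (U V : topologicalType) : continuous (@snd U V).
Proof. by move=> [a b]; exact: cvg_snd. Qed.

Lemma cluster_closureX {U V : topologicalType} {F : set_system (U * V)}
    {FF : Filter F} {A : set U} {B : set V} {p : U * V} :
  F (A `*` B) -> cluster F p -> closure A p.1 /\ closure B p.2.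
Proof.
move=> FAB Fp; split.
- apply: (@cluster_sub_closed _ _ (fst @^-1` closure A) _ _ _ Fp).
    by apply: preimage_closed => [q _|]; [exact: continuous_fst | exact: closed_closure].
  by apply: filterS FAB => q [Aq _]; exact: subset_closure.
- apply: (@cluster_sub_closed _ _ (snd @^-1` closure B) _ _ _ Fp).
    by apply: preimage_closed => [q _|]; [exact: continuous_snd | exact: closed_closure].
  by apply: filterS FAB => q [_ Bq]; exact: subset_closure.
Qed.

Lemma continuous_zit (T : topologicalType) (f g : T -> T) (n : int) :
  continuous f -> continuous g -> continuous (zit f g n).
Proof.
move=> cf cg; case: n => m /=.
  by elim: m => [|m IH] /= z; [exact: cvg_id | exact: continuous_comp (IH z) (cf _)].
by elim: m => [|m IH] /= z; [exact: cg | exact: continuous_comp (IH z) (cg _)].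
Qed.

Section MetricPairs.
Variables (R : realType) (X : metricType R).

Lemma ler_dist_mdist (x y x' y' : X) :
  `|mdist x' y' - mdist x y| <= mdist x x' + mdist y y'.
Proof.
have := metric_triangle x' x y'; have := metric_triangle x y y'.
have := metric_triangle x x' y; have := metric_triangle x' y' y.
rewrite (metric_sym x' x) (metric_sym y' y) ler_norml => *.
apply/andP; split; lra.
Qed.

Lemma continuous_mdist (h : X -> X) :
  continuous h -> continuous (fun q : X * X => mdist (h q.1) (h q.2) : R).
Proof.
move=> ch [a b]; apply/cvgrPdist_lt => e e_gt0.
have e2_gt0 : 0 < e / 2 by rewrite divr_gt0.
have near_a : \forall q \near (a, b), mdist (h a) (h q.1) < e / 2.
  exact: metricType_numDomainType.cvgr_dist_lt
    (continuous_comp (@continuous_fst _ _ (a, b)) (ch a)) _ e2_gt0.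
have near_b : \forall q \near (a, b), mdist (h b) (h q.2) < e / 2.
  exact: metricType_numDomainType.cvgr_dist_lt
    (continuous_comp (@continuous_snd _ _ (a, b)) (ch b)) _ e2_gt0.
apply: filterS2 near_a near_b => q /= qa qb.
by rewrite distrC (le_lt_trans (ler_dist_mdist _ _ _ _))// [e]splitr ltrD.
Qed.

Lemma closed_mdist_le (h : X -> X) (r : R) :
  continuous h -> closed [set q : X * X | mdist (h q.1) (h q.2) <= r].
Proof.
move=> ch; apply: (@preimage_closed _ _
  (fun q : X * X => mdist (h q.1) (h q.2) : R) [set s | s <= r]).
  by move=> q _; exact: continuous_mdist.
exact: closed_le.
Qed.

Lemma closed_mdist_ge (h : X -> X) (r : R) :
  continuous h -> closed [set q : X * X | r <= mdist (h q.1) (h q.2)].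
Proof.
move=> ch; apply: (@preimage_closed _ _
  (fun q : X * X => mdist (h q.1) (h q.2) : R) [set s | r <= s]).
  by move=> q _; exact: continuous_mdist.
exact: closed_ge.
Qed.

End MetricPairs.

Theorem lemma2p6 (R : realType) (X : metricType R) (f g : X -> X) (x : X) (c : R) :
  compact [set: X] ->
  homeo_with f g ->
  minimally_expansive_point f g x c ->
  forall y : X, mball x c y ->
  forall eps : R, 0 < eps -> eps < c ->
  exists N : nat,
    forall u v : X, orbit_z f g y u -> orbit_z f g y v ->
      (forall n : int, (- (N%:Z) <= n <= N%:Z)%R ->
         mdist (zit f g n u) (zit f g n v) < c) ->
      mdist u v < eps.
Proof.
move=> cptX [_ [_ [cf cg]]] [_ expansive] y xy eps eps_gt0 eps_lt_c.
apply: contrapT => noN.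
have bad_pair N : exists q : X * X,
    [/\ orbit_z f g y q.1, orbit_z f g y q.2,
        forall n : int, - (N%:Z) <= n <= N%:Z ->
          mdist (zit f g n q.1) (zit f g n q.2) < c
      & eps <= mdist q.1 q.2].
  apply: contrapT => noq; apply: noN; exists N => u v yu yv close.
  by rewrite ltNge; apply/negP => far; apply: noq; exists (u, v).
have [w bad_w] := choice bad_pair.
have wX : (w @ \oo) ([set: X] `*` [set: X]) by exists 0%N.
have [[a b] [_ ab_cluster]] := compact_setX cptX cptX _ wX.
have at_ab (A : set (X * X)) :
    closed A -> (\forall N \near \oo, A (w N)) -> A (a, b).
  by move=> clA wA; exact: cluster_sub_closed clA wA _ ab_cluster.
have w_orbit : (w @ \oo) (orbit_z f g y `*` orbit_z f g y).
  by exists 0%N => // N _; case: (bad_w N).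
have [/= cla clb] := cluster_closureX w_orbit ab_cluster.
have eps_le_ab : eps <= mdist a b.
  apply: (at_ab [set q | eps <= mdist q.1 q.2]).
    by apply: (@closed_mdist_ge _ _ id) => z; exact: cvg_id.
  by apply: nearW => N; case: (bad_w N).
have a_neq_b : a <> b.
  by move=> eab; move: eps_le_ab; rewrite eab mdistxx leNgt eps_gt0.
have [n c_lt_n] := expansive y xy a b cla clb a_neq_b.
suff : mdist (zit f g n a) (zit f g n b) <= c by rewrite leNgt c_lt_n.
apply: (at_ab [set q | mdist (zit f g n q.1) (zit f g n q.2) <= c]).
  exact/closed_mdist_le/continuous_zit.
exists `|n|%N => // N /= le_nN; apply: ltW; case: (bad_w N) => _ _ + _; apply.
by rewrite -ler_norml -abszE lez_nat.
Qed.
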